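(* Let $i\colon H\to G$, $\iota_E\colon E\to H$ and $\iota_F\colon F\to H$ be faithful functors of finite groupoids. Let $E\times_H F$ be the isocomma of $\iota_E$ and $\iota_F$, and $E\times_G F$ the isocomma of $i\iota_E$ and $i\iota_F$. Then the functor $E\times_HF\to E\times_GF$ sending $(x,y,h)$ to $(x,y,i(h))$ and a morphism $(e,f)$ to $(e,f)$ is fully faithful.
   Context: A finite groupoid is a finite category all of whose morphisms are invertible. For functors $a\colon X\to Z$ and $b\colon Y\to Z$ of finite groupoids, the isocomma groupoid $X\times_ZY$ has as objects the triples $(x,y,g)$ with $x$ an object of $X$, $y$ an object of $Y$ and $g\colon a(x)\to b(y)$ an isomorphism in $Z$; morphisms $(x,y,g)\to(x',y',g')$ are pairs $(h,k)$ of morphisms $h\colon x\to x'$ in $X$ and $k\colon y\to y'$ in $Y$ with $g'\,a(h)=b(k)\,g$. *)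

From HB Require Import structures.
From mathcomp Require Import all_boot.

Set Implicit Arguments.
Unset Strict Implicit.
Unset Printing Implicit Defensive.

Record fgroupoid := FGroupoid {
  Ob : finType;
  Hom : Ob -> Ob -> finType;
  idm : forall x, Hom x x;
  comp : forall {x y z}, Hom y z -> Hom x y -> Hom x z;
  inv : forall {x y}, Hom x y -> Hom y x;
  compA : forall x y z w (h : Hom z w) (g : Hom y z) (f : Hom x y),
      comp h (comp g f) = comp (comp h g) f;
  comp1m : forall x y (f : Hom x y), comp (idm y) f = f;
  compm1 : forall x y (f : Hom x y), comp f (idm x) = f;
  compVm : forall x y (f : Hom x y), comp (inv f) f = idm x;
  compmV : forall x y (f : Hom x y), comp f (inv f) = idm y }.

Arguments Hom {_} x y.
Arguments idm {_} x.
Arguments comp {_ x y z} _ _.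
Arguments inv {_ x y} _.

Record functor (C D : fgroupoid) := Functor {
  fobj : Ob C -> Ob D;
  fmor : forall {x y : Ob C}, Hom x y -> Hom (fobj x) (fobj y);
  fmor_id : forall x, fmor (idm x) = idm (fobj x);
  fmor_comp : forall x y z (g : Hom y z) (f : Hom x y),
      fmor (comp g f) = comp (fmor g) (fmor f) }.

Arguments fobj {C D} _ _.
Arguments fmor {C D} _ {x y} _.

Definition faithful (C D : fgroupoid) (F : functor C D) :=
  forall x y : Ob C, injective (@fmor C D F x y).

Definition fully_faithful (C D : fgroupoid) (F : functor C D) :=
  forall x y : Ob C, bijective (@fmor C D F x y).

Section FComp.
Variables (C D E : fgroupoid) (F : functor C D) (G : functor D E).
Lemma fcomp_id x : fmor G (fmor F (idm x)) = idm (fobj G (fobj F x)).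
Proof. by rewrite !fmor_id. Qed.
Lemma fcomp_comp x y z (g : Hom y z) (f : Hom x y) :
  fmor G (fmor F (comp g f)) = comp (fmor G (fmor F g)) (fmor G (fmor F f)).
Proof. by rewrite !fmor_comp. Qed.
Definition fcomp : functor C E :=
  @Functor C E (fun x => fobj G (fobj F x)) (fun x y h => fmor G (fmor F h))
    fcomp_id fcomp_comp.
End FComp.

Lemma fmor_inv (C D : fgroupoid) (F : functor C D) (x y : Ob C) (f : Hom x y) :
  fmor F (inv f) = inv (fmor F f).
Proof.
rewrite -[LHS]compm1 -(compmV (fmor F f)) compA -fmor_comp compVm fmor_id.
by rewrite comp1m.
Qed.

Section Isocomma.
Variables (X Y Z : fgroupoid) (a : functor X Z) (b : functor Y Z).

Definition icOb : finType :=
  Finite.clone {p : Ob X * Ob Y & Hom (fobj a p.1) (fobj b p.2)} _.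

Definition icx (u : icOb) : Ob X := (tag u).1.
Definition icy (u : icOb) : Ob Y := (tag u).2.
Definition icg (u : icOb) : Hom (fobj a (icx u)) (fobj b (icy u)) := tagged u.

Definition icHom (u v : icOb) : finType :=
  Finite.clone {hk : Hom (icx u) (icx v) * Hom (icy u) (icy v) |
     comp (icg v) (fmor a hk.1) == comp (fmor b hk.2) (icg u)} _.

Lemma ic_id_proof (u : icOb) :
  comp (icg u) (fmor a (idm (icx u))) == comp (fmor b (idm (icy u))) (icg u).
Proof. by rewrite !fmor_id compm1 comp1m. Qed.

Definition ic_id (u : icOb) : icHom u u :=
  exist _ (idm (icx u), idm (icy u)) (ic_id_proof u).

Lemma ic_comp_proof (u v w : icOb) (s : icHom v w) (t : icHom u v) :
  comp (icg w) (fmor a (comp (val s).1 (val t).1)) ==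
  comp (fmor b (comp (val s).2 (val t).2)) (icg u).
Proof.
case: s => [[h' k'] /= /eqP Es]; case: t => [[h k] /= /eqP Et].
by rewrite !fmor_comp compA Es -compA Et compA.
Qed.

Definition ic_comp (u v w : icOb) (s : icHom v w) (t : icHom u v) : icHom u w :=
  exist _ (comp (val s).1 (val t).1, comp (val s).2 (val t).2)
    (ic_comp_proof s t).

Lemma ic_inv_proof (u v : icOb) (t : icHom u v) :
  comp (icg u) (fmor a (inv (val t).1)) ==
  comp (fmor b (inv (val t).2)) (icg v).
Proof.
case: t => [[h k] /= /eqP Et]; apply/eqP; rewrite !fmor_inv.
rewrite -[LHS]comp1m -(compVm (fmor b k)) -compA.
by rewrite [comp (fmor b k) (comp _ _)]compA -Et -compA compmV compm1.
Qed.

Definition ic_inv (u v : icOb) (t : icHom u v) : icHom v u :=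
  exist _ (inv (val t).1, inv (val t).2) (ic_inv_proof t).

Lemma ic_eq (u v : icOb) (s t : icHom u v) :
  (val s).1 = (val t).1 -> (val s).2 = (val t).2 -> s = t.
Proof.
move=> E1 E2; apply: val_inj; case: (val s) E1 E2 => ??; case: (val t) => ??.
by move=> /= -> ->.
Qed.

Definition isocomma : fgroupoid.
Proof.
refine (@FGroupoid icOb icHom ic_id ic_comp ic_inv _ _ _ _ _).
- by move=> x y z w h g f; apply: ic_eq; rewrite /= compA.
- by move=> x y f; apply: ic_eq; rewrite /= comp1m.
- by move=> x y f; apply: ic_eq; rewrite /= compm1.
- by move=> x y f; apply: ic_eq; rewrite /= compVm.
- by move=> x y f; apply: ic_eq; rewrite /= compmV.
Defined.

End Isocomma.

Section Comparison.
Variables (E F H G : fgroupoid) (i : functor H G)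
  (iE : functor E H) (iF : functor F H).

Let S := isocomma iE iF.
Let T := isocomma (fcomp iE i) (fcomp iF i).

Definition cmp_obj (u : Ob S) : Ob T :=
  Tagged (fun p : Ob E * Ob F =>
            Hom (fobj i (fobj iE p.1)) (fobj i (fobj iF p.2)))
         (fmor i (icg u)).

Lemma cmp_mor_proof (u v : Ob S) (t : Hom u v) :
  comp (icg (cmp_obj v)) (fmor (fcomp iE i) (val t).1) ==
  comp (fmor (fcomp iF i) (val t).2) (icg (cmp_obj u)).
Proof.
case: t => [[e f] /= /eqP Et]; apply/eqP.
by rewrite /icg /= -!fmor_comp Et.
Qed.

Definition cmp_mor (u v : Ob S) (t : Hom u v) : Hom (cmp_obj u) (cmp_obj v) :=
  exist _ (val t) (cmp_mor_proof t).

Definition comparison : functor S T.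
Proof.
refine (@Functor S T cmp_obj cmp_mor _ _).
- by move=> x; apply: val_inj.
- by move=> x y z g f; apply: val_inj.
Defined.

End Comparison.

From Pilot Require Import Defs.
From HB Require Import structures.
From mathcomp Require Import all_boot.

Set Implicit Arguments.
Unset Strict Implicit.
Unset Printing Implicit Defensive.

(* A morphism (e, f) of E x_G F is a pair whose square commutes after
   applying i; since i is faithful, the square already commutes in H, so
   (e, f) is a morphism of E x_H F, and it is the unique preimage. *)

Lemma faithful_comp_inj (C D : fgroupoid) (P : functor C D) :
  faithful P -> forall (x y y' z : Ob C) (g : Hom y z) (f : Hom x y)
    (g' : Hom y' z) (f' : Hom x y'),
  Defs.comp (fmor P g) (fmor P f) = Defs.comp (fmor P g') (fmor P f') ->
  Defs.comp g f = Defs.comp g' f'.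
Proof.
by move=> P_faithful x y y' z g f g' f'; rewrite -!fmor_comp => /P_faithful.
Qed.

Section Comparison.
Variables (E F H G : fgroupoid) (i : functor H G)
  (iE : functor E H) (iF : functor F H).
Hypothesis i_faithful : faithful i.

Let S := isocomma iE iF.

Lemma comparison_reflects_square (u v : Ob S)
    (t : Hom (fobj (comparison i iE iF) u) (fobj (comparison i iE iF) v)) :
  Defs.comp (icg v) (fmor iE (val t).1) == Defs.comp (fmor iF (val t).2) (icg u).
Proof. by case: t => [[e f] /= /eqP Et]; apply/eqP; apply: faithful_comp_inj Et. Qed.

Definition comparison_preimage (u v : Ob S)
    (t : Hom (fobj (comparison i iE iF) u) (fobj (comparison i iE iF) v)) :
  Hom u v := exist _ (val t) (comparison_reflects_square t).

Lemma comparison_fully_faithful : fully_faithful (comparison i iE iF).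
Proof.
move=> u v; exists (@comparison_preimage u v) => t; exact: val_inj.
Qed.

End Comparison.

Theorem proposition4p1 (E F H G : fgroupoid) (i : functor H G)
  (iE : functor E H) (iF : functor F H) :
  faithful i -> faithful iE -> faithful iF ->
  fully_faithful (comparison i iE iF).
Proof.
by move=> i_faithful _ _; exact: comparison_fully_faithful.
Qed.
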